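(* Let $p>2$ be a prime which is not a Wieferich prime, and let $n$ be a positive integer not divisible by $p$. Then $P(p^2,n)=pP(p,n)$ and $P(p^3,n)=p^2P(p,n)$.
   Context: For positive integers $m,n$, let $\mathbf{Z}_m$ be the integers modulo $m$ and $T:\mathbf{Z}_m^n\to\mathbf{Z}_m^n$, $T(a_0,\dots,a_{n-1})=(a_0+a_1,a_1+a_2,\dots,a_{n-1}+a_0)$. For $\mathbf{a}\in\mathbf{Z}_m^n$ the cycle length of $(T^k\mathbf{a})_{k\ge0}$ is the smallest positive integer $P$ such that there is $N$ with $T^{k+P}\mathbf{a}=T^k\mathbf{a}$ for all $k\ge N$. $P(m,n)$ denotes the maximum of these cycle lengths over all $\mathbf{a}\in\mathbf{Z}_m^n$. A prime $p$ is a Wieferich prime if $2^{p-1}\equiv1\pmod{p^2}$. *)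

From mathcomp Require Import all_boot.
Set Implicit Arguments. Unset Strict Implicit. Unset Printing Implicit Defensive.

(* Elements of Z_m^n are represented by functions 'I_n -> nat, entries read
   modulo m; indices are cyclic (ordS i = i+1 mod n). *)
Definition Tmap (m n : nat) (a : 'I_n -> nat) : 'I_n -> nat :=
  fun i => (a i + a (ordS i)) %% m.

Definition vec_eqm (m n : nat) (a b : 'I_n -> nat) : Prop :=
  forall i : 'I_n, a i = b i %[mod m].

Definition is_eventual_period (m n : nat) (a : 'I_n -> nat) (P : nat) : Prop :=
  exists N, forall k, N <= k ->
    vec_eqm m (iter (k + P) (@Tmap m n) a) (iter k (@Tmap m n) a).

Definition cycle_length (m n : nat) (a : 'I_n -> nat) (P : nat) : Prop :=
  0 < P /\ is_eventual_period m a P /\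
  forall Q, 0 < Q -> is_eventual_period m a Q -> P <= Q.

Definition is_Pmax (m n L : nat) : Prop :=
  (exists a : 'I_n -> nat, cycle_length m a L) /\
  forall (a : 'I_n -> nat) (P : nat), cycle_length m a P -> P <= L.

Definition wieferich (p : nat) : Prop := 2 ^ p.-1 = 1 %[mod p ^ 2].

(* Write the map as the integer matrix T = 1 + S, with S the cyclic shift.
   As p does not divide n, p ^ r = 1 (mod n) for r = totient n, so S ^ (p ^ r) = S
   and the Frobenius congruence gives T ^ (p ^ r) = T (mod p): modulo p every orbit
   has a period prime to p.  Let L be the cycle length of the unit vector delta0
   modulo p.  Since the shifts of delta0 span Z^n and S commutes with T, already
   T ^ K (T ^ L - 1) = 0 (mod p), so L = P(p, n).  If X ^ K (X ^ P - 1) = 0 (mod d)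
   and p | d, then X ^ 2K (X ^ pP - 1) = 0 (mod dp), because
   X ^ K (1 + X ^ P + ... + X ^ (p-1)P) = p X ^ K (mod d); hence p ^ k L is a period
   modulo p ^ (k+1).  Conversely a period Q of delta0 modulo p ^ (k+1) is a multiple
   of L, and as T doubles the sum of the coordinates, 2 ^ Q = 1 (mod p ^ (k+1)); for
   a non-Wieferich prime this forces p ^ k | Q when k = 1, 2. *)

From mathcomp Require Import all_boot all_algebra cyclic zify.
From Stdlib Require Import Classical.

Set Implicit Arguments.
Unset Strict Implicit.
Unset Printing Implicit Defensive.

Lemma expn_mod1_gcd x M a b c : x ^ a = 1 %[mod M] -> x ^ b = 1 %[mod M] ->
  gcdn a b %| c -> x ^ c = 1 %[mod M].
Proof.
have expn_mod1_dvd e f : x ^ e = 1 %[mod M] -> e %| f -> x ^ f = 1 %[mod M].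
  by move=> xe /dvdnP[k ->]; rewrite mulnC expnM -modnXm xe modnXm exp1n.
move=> xa xb; apply: expn_mod1_dvd; case: (posnP a) => [->|a_gt0].
  by rewrite gcd0n.
have [u _ /dvdnP[v def_v]] := Bezoutl b a_gt0.
have xau : (x ^ a) ^ v = 1 %[mod M] by rewrite -modnXm xa modnXm exp1n.
have xbu : (x ^ b) ^ u = 1 %[mod M] by rewrite -modnXm xb modnXm exp1n.
have xav : (x ^ a) ^ v = x ^ gcdn a b * (x ^ b) ^ u.
  by rewrite -!expnM -expnD (mulnC b) def_v mulnC.
by rewrite -xau xav -modnMmr xbu modnMmr muln1.
Qed.

Lemma eqn_modMl_coprime k a b m : coprime k m ->
  (k * a == k * b %[mod m]) = (a == b %[mod m]).
Proof.
move=> km; wlog le_ba : a b / b <= a => [IH|].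
  by have [/IH // | /ltnW/IH E] := leqP b a; rewrite eq_sym E eq_sym.
by rewrite !eqn_mod_dvd ?leq_mul2l ?le_ba ?orbT // -mulnBr Gauss_dvdr // coprime_sym.
Qed.

Lemma coprime2_odd_prime_pow p k : prime p -> 2 < p -> coprime 2 (p ^ k).
Proof.
move=> p_pr p_gt2; rewrite coprimeXr // coprime2n.
by case: (even_prime p_pr) p_gt2 => [->|].
Qed.

Lemma odd_prime_binom_lift p t : prime p -> 2 < p ->
  (1 + p * t) ^ p = 1 + p ^ 2 * t %[mod p ^ 3].
Proof.
move=> p_pr p_gt2; rewrite expnDn; case: p p_pr p_gt2 => // p p_pr p_gt2.
rewrite !big_ord_recl /= /bump /= !exp1n !mul1n bin1 expn0 expn1 mulnA mulnn addnA.
set S := \sum_(_ < _) _; suff p3S : p.+1 ^ 3 %| S by rewrite -modnDmr (eqP p3S) addn0.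
apply: dvdn_sum => -[[|i] i_lt] _ /=; rewrite !add1n exp1n mul1n expnMn.
  by rewrite expnS mulnA dvdn_mulr // dvdn_mul // prime_dvd_bin.
by rewrite mulnCA; apply/dvdn_mulr/dvdn_exp2l.
Qed.

Lemma odd_prime_mod1_descent p x : prime p -> 2 < p ->
  x = 1 %[mod p] -> x ^ p = 1 %[mod p ^ 3] -> x = 1 %[mod p ^ 2].
Proof.
move=> p_pr p_gt2 x1 xp1; have p_gt1 := prime_gt1 p_pr.
have def_x : x = 1 + p * (x %/ p) by rewrite {1}(divn_eq x p) x1 modn_small // addnC mulnC.
move: xp1; rewrite def_x odd_prime_binom_lift // -[X in _ = X %[mod _]]addn0.
move/eqP; rewrite eqn_modDl mod0n (expnSr p 2) -/(dvdn _ _).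
rewrite dvdn_pmul2l ?expn_gt0 ?prime_gt0 // => /dvdnP[s ->].
by rewrite mulnCA -[p * p]/(p ^ 2) addnC modnMDl.
Qed.

Lemma non_wieferich_dvd p Q : prime p -> 2 < p -> ~ wieferich p ->
  2 ^ Q = 1 %[mod p ^ 2] -> p %| Q.
Proof.
move=> p_pr p_gt2 not_wief Q1; apply: contra_notT not_wief.
rewrite -prime_coprime // coprime_sym /wieferich => pQ.
have := Euler_exp_totient (coprime2_odd_prime_pow 2 p_pr p_gt2).
rewrite totient_pfactor // => /(expn_mod1_gcd Q1); apply.
by rewrite expn1 mulnC Gauss_gcdr // dvdn_gcdr.
Qed.

Lemma non_wieferich_dvd2 p Q : prime p -> 2 < p -> ~ wieferich p ->
  2 ^ Q = 1 %[mod p ^ 3] -> p ^ 2 %| Q.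
Proof.
move=> p_pr p_gt2 not_wief Q1.
have /dvdnP[q def_Q] : p %| Q.
  have p2_p3 : p ^ 2 %| p ^ 3 by rewrite dvdn_exp2l.
  by apply: non_wieferich_dvd => //; rewrite -(modn_dvdm _ p2_p3) Q1 modn_dvdm.
rewrite def_Q mulnC (expnS p 1) expn1 dvdn_pmul2l ?prime_gt0 //.
apply: contra_notT not_wief; rewrite -prime_coprime // /wieferich => pq.
have fermat : 2 ^ p.-1 = 1 %[mod p].
  by rewrite -totient_prime // Euler_exp_totient // -(expn1 p) coprime2_odd_prime_pow.
apply: (odd_prime_mod1_descent p_pr p_gt2 fermat); rewrite -expnM.
have := Euler_exp_totient (coprime2_odd_prime_pow 3 p_pr p_gt2).
rewrite totient_pfactor // => /(expn_mod1_gcd Q1); apply.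
rewrite def_Q mulnC (expnS p 1) expn1 mulnCA -muln_gcdr Gauss_gcdl 1?coprime_sym //.
by rewrite [p.-1 * p]mulnC dvdn_pmul2l ?prime_gt0 ?dvdn_gcdr.
Qed.

Section Orbits.

Variables m n : nat.
Implicit Types a : 'I_n -> nat.

Lemma eventual_period_sub a P Q : is_eventual_period m a P ->
  is_eventual_period m a Q -> P <= Q -> is_eventual_period m a (Q - P).
Proof.
move=> [N1 HP] [N2 HQ] le_PQ; exists (N1 + N2) => k le_k i.
have le1 : N1 <= k + (Q - P) by lia.
have le2 : N2 <= k by lia.
by rewrite -(HP _ le1 i) -addnA subnK // (HQ k le2 i).
Qed.

Lemma cycle_length_dvd a L Q : cycle_length m a L ->
  is_eventual_period m a Q -> L %| Q.
Proof.
move=> [L_gt0 [HL L_min]]; elim/ltn_ind: Q => Q IH HQ.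
have [lt_QL | le_LQ] := ltnP Q L.
  have [-> // | Q_gt0] := posnP Q.
  by have := L_min Q Q_gt0 HQ; rewrite leqNgt lt_QL.
rewrite -(subnK le_LQ) dvdn_addl //; apply: IH; first lia.
exact: eventual_period_sub HL HQ le_LQ.
Qed.

Lemma cycle_length_exists a P : 0 < P -> is_eventual_period m a P ->
  exists L, cycle_length m a L.
Proof.
elim/ltn_ind: P => P IH P_gt0 HP.
case: (classic (exists2 Q, 0 < Q < P & is_eventual_period m a Q)).
  by move=> [Q /andP[Q_gt0 lt_QP] HQ]; apply: IH lt_QP Q_gt0 HQ.
move=> no_smaller; exists P; split=> //; split=> // Q Q_gt0 HQ; rewrite leqNgt.
by apply/negP => lt_QP; apply: no_smaller; exists Q; rewrite ?Q_gt0.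
Qed.

Lemma sum_Tmap a : \sum_i Tmap m a i = 2 * \sum_i a i %[mod m].
Proof.
have shift_sum : \sum_i a (ordS i) = \sum_i a i.
  by rewrite [RHS](reindex_inj (@ordS_inj n)).
by rewrite modn_summ big_split /= shift_sum addnn mul2n.
Qed.

Lemma sum_iter_Tmap a k :
  \sum_i iter k (@Tmap m n) a i = 2 ^ k * \sum_i a i %[mod m].
Proof.
elim: k => [|k IH]; first by rewrite mul1n.
by rewrite iterS sum_Tmap -modnMmr IH modnMmr mulnA -expnS.
Qed.

Lemma eventual_period_exp2 a P : coprime 2 m -> coprime (\sum_i a i) m ->
  is_eventual_period m a P -> 2 ^ P = 1 %[mod m].
Proof.
move=> m_odd a_m [N HN]; apply/eqP.
rewrite -(@eqn_modMl_coprime (2 ^ N * \sum_i a i)) ?coprimeMl ?coprimeXl ?m_odd //.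
have sums : \sum_i iter (N + P) (@Tmap m n) a i = \sum_i iter N (@Tmap m n) a i %[mod m].
  by rewrite -modn_summ (eq_bigr _ (fun i _ => HN N (leqnn N) i)) modn_summ.
by move: sums; rewrite !sum_iter_Tmap expnD mulnAC muln1 mulnC => ->.
Qed.

End Orbits.

Import GRing.Theory.
Local Open Scope ring_scope.

Section DvdzMatrices.

Implicit Types d e : int.

Lemma mxOver_dvdzM d e m1 m2 m3 (A : 'M[int]_(m1, m2)) (B : 'M[int]_(m2, m3)) :
  A \is a mxOver (dvdz d) -> B \is a mxOver (dvdz e) ->
  A *m B \is a mxOver (dvdz (d * e)).
Proof.
move=> /mxOverP dA /mxOverP dB; apply/mxOverP => i j.
by rewrite mxE rpred_sum // => k _; rewrite dvdz_mul.
Qed.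

Lemma mxOver_dvdz_mull d m1 m2 m3 (A : 'M[int]_(m1, m2)) (B : 'M[int]_(m2, m3)) :
  B \is a mxOver (dvdz d) -> A *m B \is a mxOver (dvdz d).
Proof.
move=> /mxOverP dB; apply/mxOverP => i j.
by rewrite mxE rpred_sum // => k _; rewrite dvdz_mull.
Qed.

Lemma mxOver_dvdz_mulr d m1 m2 m3 (A : 'M[int]_(m1, m2)) (B : 'M[int]_(m2, m3)) :
  A \is a mxOver (dvdz d) -> A *m B \is a mxOver (dvdz d).
Proof.
move=> /mxOverP dA; apply/mxOverP => i j.
by rewrite mxE rpred_sum // => k _; rewrite dvdz_mulr.
Qed.

Lemma mxOver_dvdz_muln d m1 m2 (A : 'M[int]_(m1, m2)) c :
  (`|d| %| c)%N -> A *+ c \is a mxOver (dvdz d).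
Proof.
move=> /dvdnP[q ->]; apply/mxOverP => i j.
by rewrite mulmxnE mulrnA -mulr_natr dvdz_mull // natz dvdzE absz_nat.
Qed.

Variable n : nat.
Implicit Types A B Y : 'M[int]_n.+1.

Lemma mxOver_dvdz_exprB d A B k :
  A - B \is a mxOver (dvdz d) -> A ^+ k - B ^+ k \is a mxOver (dvdz d).
Proof.
move=> dAB; elim: k => [|k IH]; first by rewrite subrr rpred0.
have -> : A ^+ k.+1 - B ^+ k.+1 = A * (A ^+ k - B ^+ k) + (A - B) * B ^+ k.
  by rewrite !exprS mulrBr mulrBl addrA subrK.
by rewrite -!mulmxE rpredD //; [apply: mxOver_dvdz_mull | apply: mxOver_dvdz_mulr].
Qed.

Lemma mxOver_dvdz_frobenius (p : nat) Y : prime p ->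
  (Y + 1) ^+ p - (Y ^+ p + 1) \is a mxOver (dvdz p).
Proof.
case: p => // p p_pr; rewrite exprD1n big_ord_recr big_ord_recl /= binn bin0 expr0.
rewrite !mulr1n addrKA [1 + _]addrC addrK; apply: rpred_sum => i _.
by apply: mxOver_dvdz_muln; rewrite absz_nat prime_dvd_bin //= /bump /= add1n ltnS.
Qed.

Lemma mxOver_dvdz_frobenius_iter (p r : nat) Y : prime p ->
  (Y + 1) ^+ (p ^ r) - (Y ^+ (p ^ r) + 1) \is a mxOver (dvdz p).
Proof.
move=> p_pr; elim: r => [|r IH]; first by rewrite !expr1 subrr rpred0.
rewrite expnSr !exprM -(subrK ((Y ^+ (p ^ r) + 1) ^+ p) (_ ^+ p)) -addrA.
by apply: rpredD; [apply: mxOver_dvdz_exprB | apply: mxOver_dvdz_frobenius].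
Qed.

End DvdzMatrices.

Definition mx_eventual_period n (X : 'M[int]_n.+1) (d : int) (P : nat) :=
  exists K, X ^+ K * (X ^+ P - 1) \is a mxOver (dvdz d).

Lemma mx_eventual_period_lift n (X : 'M[int]_n.+1) d (p P : nat) : (p %| d)%Z ->
  mx_eventual_period X d P -> mx_eventual_period X (d * p) (p * P).
Proof.
move=> p_d [K dZY]; exists (K + K); set Z := X ^+ K; set Y := X ^+ P.
have dZYi i : Z * Y ^+ i - Z \is a mxOver (dvdz d).
  elim: i => [|i IH]; first by rewrite mulr1 subrr rpred0.
  have -> : Z * Y ^+ i.+1 - Z = (Z * Y ^+ i - Z) * Y + Z * (Y - 1).
    by rewrite exprSr mulrA mulrBl mulrBr mulr1 addrA subrK.
  by apply: rpredD => //; rewrite -mulmxE; apply: mxOver_dvdz_mulr.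
have pZsum : Z * \sum_(i < p) Y ^+ i \is a mxOver (dvdz p).
  have -> : Z * \sum_(i < p) Y ^+ i = \sum_(i < p) (Z * Y ^+ i - Z) + Z *+ p.
    by rewrite sumrB sumr_const card_ord subrK mulr_sumr.
  apply: rpredD; last by apply: mxOver_dvdz_muln; rewrite absz_nat.
  by apply: rpred_sum => i _; apply: mxOverS (dZYi i) => x; apply: dvdz_trans.
have ZY_comm : (Y - 1) * Z = Z * (Y - 1).
  by rewrite mulrBl mulrBr mul1r mulr1 -!exprD addnC.
have -> : X ^+ (K + K) * (X ^+ (p * P) - 1) = Z * (Y - 1) * (Z * \sum_(i < p) Y ^+ i).
  by rewrite mulnC exprM subrX1 exprD -!mulrA; congr (_ * _); rewrite !mulrA ZY_comm.
by rewrite -mulmxE; apply: mxOver_dvdzM.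
Qed.

Section ShiftOperator.

Variable n : nat.
Implicit Types (m : nat) (a : 'I_n.+1 -> nat).

Definition shiftmx : 'M[int]_n.+1 := \matrix_(i, j) (j == ordS i)%:R.
Definition Tmx : 'M[int]_n.+1 := 1 + shiftmx.
Definition col_of a : 'cV[int]_n.+1 := \col_i (a i)%:Z.
Definition delta0 : 'I_n.+1 -> nat := fun i => i == ord0.

Lemma iter_ordS t (i : 'I_n.+1) : val (iter t (@ordS n.+1) i) = ((i + t) %% n.+1)%N.
Proof.
elim: t => [|t IH]; first by rewrite addn0 modn_small.
by rewrite iterS /= IH addnS -addn1 modnDml addn1.
Qed.

Lemma shiftmxX_mul t k (w : 'M[int]_(n.+1, k)) :
  shiftmx ^+ t *m w = \matrix_(i, j) w (iter t (@ordS n.+1) i) j.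
Proof.
elim: t => [|t IH]; first by rewrite mul1mx; apply/matrixP => i j; rewrite mxE.
rewrite exprS -mulmxE -mulmxA IH; apply/matrixP => i j; rewrite !mxE.
rewrite (bigD1 (ordS i)) //= !mxE eqxx mul1r big1 ?addr0; first by rewrite -iterS iterSr.
by move=> l /negbTE l_i; rewrite !mxE l_i mul0r.
Qed.

Lemma shiftmx_exp_mod t : (t = 1 %[mod n.+1])%N -> shiftmx ^+ t = shiftmx.
Proof.
move=> t1; have := shiftmxX_mul t 1%:M; have := shiftmxX_mul 1 1%:M.
rewrite !mulmx1 expr1 => -> ->; apply/matrixP => i j; rewrite !mxE.
suff -> : iter t (@ordS n.+1) i = iter 1 (@ordS n.+1) i by [].
by apply: val_inj; rewrite !iter_ordS -modnDmr t1 modnDmr.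
Qed.

Lemma Tmx_frobenius_period p : prime p -> coprime p n.+1 ->
  exists M, [/\ 0 < M, coprime p M & mx_eventual_period Tmx p M]%N.
Proof.
move=> p_pr p_n; have r_gt0 : (0 < totient n.+1)%N by rewrite totient_gt0.
set r := totient n.+1 in r_gt0 *; exists (p ^ r - 1)%N.
have p_r1 : (1 < p ^ r)%N by rewrite -{1}(expn0 p) ltn_exp2l ?prime_gt1.
split; first by rewrite subn_gt0.
  have := coprimenS (p ^ r).-1.
  by rewrite prednK ?(ltnW p_r1) // coprime_pexpr // coprime_sym subn1.
exists 1%N; rewrite expr1 mulrBr mulr1 -exprS subn1 prednK ?(ltnW p_r1) //.
have S_pr : shiftmx ^+ (p ^ r) = shiftmx := shiftmx_exp_mod (Euler_exp_totient p_n).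
rewrite /Tmx [1 + _]addrC -[in X in _ - X]S_pr.
exact: mxOver_dvdz_frobenius_iter.
Qed.

Lemma Tmx_mulE k (w : 'M[int]_(n.+1, k)) :
  Tmx *m w = \matrix_(i, j) (w i j + w (ordS i) j).
Proof.
rewrite mulmxDl mul1mx -[shiftmx]expr1 shiftmxX_mul.
by apply/matrixP => i j; rewrite !mxE.
Qed.

Lemma iter_Tmap_mx m a k i :
  ((iter k (@Tmap m n.+1) a i)%:Z = (Tmx ^+ k *m col_of a) i ord0 %[mod m])%Z.
Proof.
elim: k i => [|k IH] i; first by rewrite mul1mx mxE.
rewrite iterS exprS -mulmxE -mulmxA Tmx_mulE mxE; set b := iter k _ a.
by rewrite /Tmap modz_nat modn_mod -modz_nat PoszD -modzDml IH modzDml -modzDmr IH modzDmr.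
Qed.

Lemma eventual_periodE m a P : is_eventual_period m a P <->
  exists K, Tmx ^+ K * (Tmx ^+ P - 1) *m col_of a \is a mxOver (dvdz m).
Proof.
have orbit_eq k1 k2 : vec_eqm m (iter k1 (@Tmap m n.+1) a) (iter k2 (@Tmap m n.+1) a) <->
    (Tmx ^+ k1 - Tmx ^+ k2) *m col_of a \is a mxOver (dvdz m).
  have entry_eq i : (iter k1 (@Tmap m n.+1) a i = iter k2 (@Tmap m n.+1) a i %[mod m])%N <->
      (m%:Z %| ((Tmx ^+ k1 - Tmx ^+ k2) *m col_of a) i ord0)%Z.
    have -> : ((Tmx ^+ k1 - Tmx ^+ k2) *m col_of a) i ord0 =
        (Tmx ^+ k1 *m col_of a) i ord0 - (Tmx ^+ k2 *m col_of a) i ord0.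
      by rewrite mulmxBl !mxE.
    rewrite -eqz_mod_dvd -(iter_Tmap_mx _ _ k1 i).
    by rewrite -(iter_Tmap_mx _ _ k2 i) !modz_nat eqz_nat; split=> /eqP.
  split=> [eq12 | /mxOverP d12 i]; last exact/entry_eq.
  by apply/mxOverP => i j; rewrite (ord1 j); apply/entry_eq.
split=> [[N HN] | [K HK]].
  by exists N; rewrite mulrBr mulr1 -exprD; apply/orbit_eq/HN.
exists K => k le_Kk; apply/orbit_eq.
have -> : Tmx ^+ (k + P) - Tmx ^+ k = Tmx ^+ (k - K) * (Tmx ^+ K * (Tmx ^+ P - 1)).
  by rewrite mulrA -exprD subnK // mulrBr mulr1 -exprD.
by rewrite -mulmxE -mulmxA; apply: mxOver_dvdz_mull.
Qed.

Lemma eventual_period_dvdn d m a P : (d %| m)%N ->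
  is_eventual_period m a P -> is_eventual_period d a P.
Proof.
move=> d_m /eventual_periodE[K HK]; apply/eventual_periodE; exists K.
by apply: mxOverS HK => x; apply: dvdz_trans; rewrite dvdzE !absz_nat.
Qed.

Lemma eventual_period_of_mx m a P :
  mx_eventual_period Tmx m P -> is_eventual_period m a P.
Proof. by move=> [K HK]; apply/eventual_periodE; exists K; apply: mxOver_dvdz_mulr. Qed.

Lemma shiftmxX_delta0 (j : 'I_n.+1) :
  shiftmx ^+ (n.+1 - j) *m col_of delta0 = delta_mx j ord0.
Proof.
rewrite shiftmxX_mul; apply/matrixP => k l; rewrite !mxE (ord1 l) eqxx andbT /delta0 natz.
have jt0 : ((j + (n.+1 - j)) %% n.+1 = 0)%N by rewrite subnKC ?modnn // ltnW.
by rewrite -val_eqE iter_ordS /= -jt0 eqn_modDr !modn_small.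
Qed.

Lemma mxOver_dvdz_shift_comm d A : GRing.comm A shiftmx ->
  A *m col_of delta0 \is a mxOver (dvdz d) -> A \is a mxOver (dvdz d).
Proof.
move=> AS dA; apply/mxOverP => i j.
have -> : A i j = (A *m (shiftmx ^+ (n.+1 - j) *m col_of delta0)) i ord0.
  by rewrite shiftmxX_delta0 -colE mxE.
rewrite mulmxA mulmxE (commrX _ AS) -mulmxE -mulmxA.
by move/mxOverP: (mxOver_dvdz_mull (shiftmx ^+ (n.+1 - j)) dA); apply.
Qed.

Lemma eventual_period_delta0 m P :
  is_eventual_period m delta0 P -> mx_eventual_period Tmx m P.
Proof.
move=> /eventual_periodE[K HK]; exists K; apply: mxOver_dvdz_shift_comm HK.
have ST : GRing.comm shiftmx Tmx by rewrite /GRing.comm mulrDr mulrDl mulr1 mul1r.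
by apply/commr_sym/commrM; [apply: commrX | apply: commrB; [apply: commrX | apply: commr1]].
Qed.

Lemma sum_delta0 : (\sum_i delta0 i)%N = 1%N.
Proof. by rewrite (bigD1 ord0) //= big1 ?addn0 // => i; rewrite /delta0 => /negbTE->. Qed.

Lemma is_Pmax_delta0 m M : (0 < M)%N -> mx_eventual_period Tmx m M ->
  (forall Q, is_eventual_period m delta0 Q -> (M %| Q)%N) -> is_Pmax m n.+1 M.
Proof.
move=> M_gt0 TM M_dvd; split.
  exists delta0; split=> //; split; first exact: eventual_period_of_mx.
  by move=> Q Q_gt0 /M_dvd /dvdn_leq; apply.
by move=> a P [P_gt0 [_ P_min]]; apply: P_min M_gt0 (eventual_period_of_mx _ TM).
Qed.

End ShiftOperator.

Local Close Scope ring_scope.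

Section PrimePowerModuli.

Variables p n L : nat.
Hypotheses (p_pr : prime p) (p_gt2 : 2 < p) (p_n : coprime p n.+1).
Hypothesis L_cycle : cycle_length p (@delta0 n) L.

Lemma coprime_cycle_length : coprime p L.
Proof.
have [M [_ p_M TM]] := Tmx_frobenius_period p_pr p_n.
exact: coprime_dvdr (cycle_length_dvd L_cycle (eventual_period_of_mx _ TM)) p_M.
Qed.

Lemma Tmx_period_prime_pow k : mx_eventual_period (Tmx n) (p ^ k.+1)%N (p ^ k * L).
Proof.
elim: k => [|k IH].
  by rewrite mul1n; apply: eventual_period_delta0; case: L_cycle => _ [].
have p_dvd : (p%:Z %| Posz (p ^ k.+1)%N)%Z by rewrite dvdzE !absz_nat dvdn_exp.
by have := mx_eventual_period_lift p_dvd IH; rewrite -PoszM -expnSr mulnA -expnS.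
Qed.

Lemma is_Pmax_prime_pow k :
  (forall Q, 2 ^ Q = 1 %[mod p ^ k.+1] -> p ^ k %| Q) ->
  is_Pmax (p ^ k.+1) n.+1 (p ^ k * L).
Proof.
move=> ord2_dvd; apply: (is_Pmax_delta0 _ (Tmx_period_prime_pow k)) => [|Q HQ].
  by case: L_cycle => L_gt0 _; rewrite muln_gt0 expn_gt0 prime_gt0.
rewrite Gauss_dvd ?coprimeXl ?coprime_cycle_length //; apply/andP; split.
  apply/ord2_dvd/(eventual_period_exp2 _ _ HQ); first exact: coprime2_odd_prime_pow.
  by rewrite sum_delta0 coprime1n.
by apply: cycle_length_dvd L_cycle _; apply: eventual_period_dvdn HQ; rewrite dvdn_exp.
Qed.

End PrimePowerModuli.

Theorem proposition5p3 (p n : nat) :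
  prime p -> 2 < p -> ~ wieferich p -> 0 < n -> ~~ (p %| n) ->
  exists L : nat,
    [/\ is_Pmax p n L, is_Pmax (p ^ 2) n (p * L) & is_Pmax (p ^ 3) n (p ^ 2 * L)].
Proof.
move=> p_pr p_gt2 not_wief; case: n => // n _; rewrite -prime_coprime // => p_n.
have [M [M_gt0 _ TM]] := Tmx_frobenius_period p_pr p_n.
have [L L_cycle] := cycle_length_exists M_gt0 (eventual_period_of_mx (@delta0 n) TM).
have Pmax := is_Pmax_prime_pow p_pr p_gt2 p_n L_cycle.
exists L; split.
- by rewrite -[L]mul1n; apply: (Pmax 0) => Q _; rewrite dvd1n.
- by apply: (Pmax 1) => Q; apply: non_wieferich_dvd.
- by apply: (Pmax 2) => Q; apply: non_wieferich_dvd2.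
Qed.
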